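(* Let $\mathbb K$ be a commutative semiring with $0\ne1$ and let $S:\mathrm{TXT}(\Delta)\to K$ be a regular alternating text series. Then $\pi(S):\Delta^*\to K$ is an algebraic formal power series.
   Context: Texts: a text over a finite alphabet $\Delta$ is $(V,\lambda,\le_1,\le_2)$ with $V$ finite nonempty, $\lambda:V\to\Delta$, $\le_1,\le_2$ linear orders on $V$, up to isomorphism. $\tau\circ\tau'$ (resp. $\tau\bullet\tau'$): disjoint union, all of $\tau$ before all of $\tau'$ in $\le_1$, and in $\le_2$ all of $\tau$ before $\tau'$ (resp. all of $\tau'$ before $\tau$). $\mathrm{TXT}(\Delta)$ (alternating texts) is the set of texts generated from singleton texts by $\circ,\bullet$. Projection: $\pi(\tau)$ is the word of labels read along $\le_1$, and $\pi(S)(w)=\sum_{\tau\in\mathrm{TXT}(\Delta),\pi(\tau)=w}S(\tau)$ (so $0$ at $\varepsilon$). WPA: $\mathcal A=(H,V,\Omega,\mu,\mu_{op},\mu_{cl},\lambda,\gamma)$, $H,V$ disjoint finite sets, $\Omega$ finite, $\mu:(H\times\Delta\times H)\cup(V\times\Delta\times V)\to K$, $\mu_{op},\mu_{cl}:(H\times\Omega\times V)\cup(V\times\Omega\times H)\to K$, $\lambda,\gamma:H\cup V\to K$. Runs (with label, weight, initial/final state): (1) for $(q_1,q_2)\in(H\times H)\cup(V\times V)$, $a\in\Delta$, $(q_1,a,q_2)$ is a run from $q_1$ to $q_2$ with label $a$ and weight $\mu(q_1,a,q_2)$; (2) if runs $r_1,r_2$ satisfy final$(r_1)=$ initial$(r_2)=q$,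 then $r_1r_2$ is a run from initial$(r_1)$ to final$(r_2)$ with weight the product and label $\mathrm{lab}(r_1)\circ\mathrm{lab}(r_2)$ if $q\in H$, $\mathrm{lab}(r_1)\bullet\mathrm{lab}(r_2)$ if $q\in V$; (3) if $r$ is a run obtained by rule (2), from $p_1$ to $p_2$, with $p_1\in H$ (resp. $V$) and $q_1,q_2\in V$ (resp. $H$), $s\in\Omega$, then $(q_1,(_s,p_1)\,r\,(p_2,)_s,q_2)$ is a run from $q_1$ to $q_2$ with label $\mathrm{lab}(r)$ and weight $\mu_{op}(q_1,s,p_1)\mathrm{wt}(r)\mu_{cl}(p_2,s,q_2)$. $\|\mathcal A\|(\tau)=\sum_{q_1,q_2}\lambda(q_1)\sum_r\mathrm{wt}(r)\gamma(q_2)$ over runs from $q_1$ to $q_2$ labeled $\tau$. A series $\mathrm{TXT}(\Delta)\to K$ is regular if it is some $\|\mathcal A\|$. Algebraic series: formal power series are maps $\Delta^*\to K$ with pointwise sum/scalar product and Cauchy product $(S_1S_2)(w)=\sum_{w=w_1w_2}S_1(w_1)S_2(w_2)$; words identified with characteristic series. For a finite variable set $\mathcal X$ disjoint from $\Delta$, a polynomial is a finitely supported map $(\Delta\cup\mathcal X)^*\to K$; an algebraic system is $(P_X)_{X\in\mathcal X}$; a solution is $(S_X)$ with $S_X=\sum(P_X,u_1X_1\cdots u_kX_ku_{k+1})u_1S_{X_1}\cdots u_kS_{X_k}u_{k+1}$ over the support of $P_X$. Proper: $P_X(Y)=P_X(\varepsilon)=0$ for all $X,Y$; quasiregular: $S(\varepsilon)=0$.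 A proper system has exactly one quasiregular solution; algebraic series are its components for some proper system. *)

From mathcomp Require Import all_boot all_order all_algebra.
From Stdlib Require List.
Set Implicit Arguments. Unset Strict Implicit. Unset Printing Implicit Defensive.
Import GRing.Theory.
Local Open Scope ring_scope.

Definition fsum_is (K : nmodType) (T : Type) (P : T -> Prop) (f : T -> K) (k : K) :=
  exists l : seq T, List.NoDup l /\ (forall x, List.In x l <-> P x) /\
                    k = \sum_(x <- l) f x.

(* Texts up to isomorphism.  A text (V,lambda,<=1,<=2) with |V| = n is *)
(* represented canonically by numbering V as 0..n-1 along <=1:         *)
(*   tw = the word of labels read along <=1  (so pi(tau) = tw tau),    *)
(*   tp = the list of these indices read along <=2.                    *)
(* Two texts are isomorphic iff their representations are equal.      *)
Record text (D : Type) := Text { tw : seq D; tp : seq nat }.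

Definition shiftp (n : nat) (p : seq nat) := map (addn n) p.

Definition tsing (D : Type) (a : D) : text D := Text [:: a] [:: 0%N].

(* tau o tau' : tau before tau' in both orders *)
Definition tcomp (D : Type) (t1 t2 : text D) : text D :=
  Text (tw t1 ++ tw t2) (tp t1 ++ shiftp (size (tw t1)) (tp t2)).

(* tau . tau' : tau before tau' in <=1, tau' before tau in <=2 *)
Definition tbul (D : Type) (t1 t2 : text D) : text D :=
  Text (tw t1 ++ tw t2) (shiftp (size (tw t1)) (tp t2) ++ tp t1).

Inductive alt_text (D : Type) : text D -> Prop :=
  | alt_sing (a : D) : alt_text (tsing a)
  | alt_comp t1 t2 : alt_text t1 -> alt_text t2 -> alt_text (tcomp t1 t2)
  | alt_bul  t1 t2 : alt_text t1 -> alt_text t2 -> alt_text (tbul t1 t2).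

Definition proj_is (K : nmodType) (D : Type) (S : text D -> K) (T : seq D -> K) :=
  forall w : seq D, fsum_is (fun t : text D => alt_text t /\ tw t = w) S (T w).

(* Weighted pebble automata.  The state set is Q = H (disjoint union) V *)
(* with isH q = true iff q is in H.  The weight functions are given on  *)
(* all triples; only their values on the domains of the paper           *)
(* ((HxDxH) u (VxDxV) for mu, (HxOxV) u (VxOxH) for mu_op, mu_cl) are   *)
(* ever used by runs.                                                   *)
Record wpa (K : pzSemiRingType) (D : Type) := WPA {
  wQ : finType;
  wO : finType;
  isH : wQ -> bool;
  mu : wQ -> D -> wQ -> K;
  mu_op : wQ -> wO -> wQ -> K;
  mu_cl : wQ -> wO -> wQ -> K;
  lam : wQ -> K;
  gam : wQ -> K }.

(* Runs as terms: a run is a nonempty sequence (concatenation, rule 2) *)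
(* of blocks; a block is an atomic run (rule 1) or a bracketed run     *)
(* (q1,(_s,p1) r (p2,)_s,q2) (rule 3).                                  *)
Inductive block (Q D O : Type) :=
  | Atom (q1 : Q) (a : D) (q2 : Q)
  | Wrap (q1 : Q) (s : O) (p1 : Q) (r : run Q D O) (p2 q2 : Q)
with run (Q D O : Type) :=
  | One (b : block Q D O)
  | More (b : block Q D O) (r : run Q D O).

Arguments Atom {Q D O}. Arguments Wrap {Q D O}.
Arguments One {Q D O}. Arguments More {Q D O}.

Section Runs.
Variables (K : pzSemiRingType) (D : Type) (A : wpa K D).
Local Notation Q := (wQ A).
Local Notation O := (wO A).

Definition binit (b : block Q D O) : Q :=
  match b with Atom q1 _ _ => q1 | Wrap q1 _ _ _ _ _ => q1 end.
Definition bfin (b : block Q D O) : Q :=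
  match b with Atom _ _ q2 => q2 | Wrap _ _ _ _ _ q2 => q2 end.
Definition rinit (r : run Q D O) : Q :=
  match r with One b => binit b | More b _ => binit b end.
Fixpoint rfin (r : run Q D O) : Q :=
  match r with One b => bfin b | More _ r' => rfin r' end.

Definition by_rule2 (r : run Q D O) : Prop :=
  match r with One _ => False | More _ _ => True end.

Fixpoint bvalid (b : block Q D O) : Prop :=
  match b with
  | Atom q1 a q2 => isH q1 = isH q2
  | Wrap q1 s p1 r p2 q2 =>
      by_rule2 r /\ rvalid r /\ p1 = rinit r /\ p2 = rfin r /\
      isH q1 = ~~ isH p1 /\ isH q2 = ~~ isH p1
  end
with rvalid (r : run Q D O) : Prop :=
  match r with
  | One b => bvalid b
  | More b r' => bvalid b /\ rvalid r' /\ bfin b = rinit r'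
  end.

Fixpoint bwt (b : block Q D O) : K :=
  match b with
  | Atom q1 a q2 => mu q1 a q2
  | Wrap q1 s p1 r p2 q2 => mu_op q1 s p1 * rwt r * mu_cl p2 s q2
  end
with rwt (r : run Q D O) : K :=
  match r with
  | One b => bwt b
  | More b r' => bwt b * rwt r'
  end.

Fixpoint blab (b : block Q D O) : text D :=
  match b with
  | Atom _ a _ => tsing a
  | Wrap _ _ _ r _ _ => rlab r
  end
with rlab (r : run Q D O) : text D :=
  match r with
  | One b => blab b
  | More b r' => if isH (bfin b) then tcomp (blab b) (rlab r')
                 else tbul (blab b) (rlab r')
  end.

Definition behaviour_is (t : text D) (k : K) : Prop :=
  fsum_is (fun r : run Q D O => rvalid r /\ rlab r = t)
          (fun r => lam (rinit r) * rwt r * gam (rfin r)) k.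
End Runs.

Definition regular_text_series (K : pzSemiRingType) (D : Type) (S : text D -> K) :=
  exists A : wpa K D, forall t, alt_text t -> behaviour_is A t (S t).

Section Series.
Variables (K : pzSemiRingType) (D : eqType).
Definition series := seq D -> K.

Definition ser_word (u : seq D) : series := fun w => (w == u)%:R.
Definition ser_add (S1 S2 : series) : series := fun w => S1 w + S2 w.
Definition ser_scale (c : K) (S1 : series) : series := fun w => c * S1 w.
Definition ser_mul (S1 S2 : series) : series :=
  fun w => \sum_(i < (size w).+1) S1 (take i w) * S2 (drop i w).

(* polynomial over variables X: finitely supported map (D u X)^* -> K *)
Record poly_sys (X : finType) := Poly {
  pcoef : seq (D + X)%type -> K;
  psupp : seq (seq (D + X)%type);
  psupp_uniq : uniq psupp;
  psupp_ok : forall u, pcoef u != 0 -> u \in psupp }.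

Definition eval_mono (X : finType) (SX : X -> series) (u : seq (D + X)%type) : series :=
  foldr (fun x acc => ser_mul (match x with inl a => ser_word [:: a] | inr Y => SX Y end) acc)
        (ser_word [::]) u.

Definition is_solution (X : finType) (P : X -> poly_sys X) (SX : X -> series) :=
  forall (Y : X) (w : seq D),
    SX Y w = \sum_(u <- psupp (P Y)) pcoef (P Y) u * eval_mono SX u w.

Definition proper_sys (X : finType) (P : X -> poly_sys X) :=
  forall Y Z : X, pcoef (P Y) [:: inr Z] = 0 /\ pcoef (P Y) [::] = 0.

Definition quasiregular (T : series) := T [::] = 0.

Definition algebraic (T : series) :=
  exists (X : finType) (P : X -> poly_sys X) (SX : X -> series) (X0 : X),
    proper_sys P /\ is_solution P SX /\ (forall Y, quasiregular (SX Y)) /\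
    T = SX X0.
End Series.

(* Sort the runs of the automaton by shape: a block is a letter or a bracketed
   chain, a chain is a block followed by a run, and a run is a block or a chain.
   For states p, q let B_pq, C_pq, R_pq = B_pq + C_pq be the series summing the
   weights of the blocks, chains and runs from p to q over their yield.  Cutting
   a chain after its first block and opening the bracket of a block give
     C_pq = sum_m B_pm (B_mq + C_mq),
     B_pq = sum_a [p, q on the same side] mu(p,a,q) a
            + sum_(s,p',q') [p', q' on the other side] mu_op(p,s,p') mu_cl(q',s,q) C_p'q',
   and the behaviour is sum_(p,q) lam(p) gam(q) R_pq.  This system is proper,
   since every monomial is a letter or a product of two variables, and its
   solution is quasiregular, since yields are nonempty.  The label of a run is
   an alternating text whose word is the yield of the run, so grouping the runs
   by label shows that the behaviour is pi(S).  All these sums are finite: the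
   runs and texts over w appear in explicit lists built by splitting w into
   nonempty parts at most |w| times. *)

From Pilot Require Import Defs.
From HB Require Import structures.
From mathcomp Require Import all_boot all_order all_algebra.
From mathcomp Require Import zify boolp.
From Stdlib Require List.
Set Implicit Arguments. Unset Strict Implicit. Unset Printing Implicit Defensive.
Import GRing.Theory.
Local Open Scope ring_scope.

Lemma In_mem (T : eqType) (l : seq T) x : List.In x l <-> x \in l.
Proof.
elim: l => [|y l IH] //=; rewrite inE.
split=> [[->|/IH->] | /orP[/eqP->|/IH]]; rewrite ?eqxx ?orbT; auto.
Qed.

Lemma NoDup_uniq (T : eqType) (l : seq T) : List.NoDup l <-> uniq l.
Proof.
elim: l => [|x l IH]; first by split=> // _; constructor.
rewrite List.NoDup_cons_iff /= IH In_mem.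
by split=> [[/negP-> ->] | /andP[/negP ? ?]].
Qed.

Lemma all_flatten (T : Type) (P : pred T) (ss : seq (seq T)) :
  all P (flatten ss) = all (all P) ss.
Proof. by elim: ss => //= s ss IH; rewrite all_cat IH. Qed.

Section FiniteSums.
Variable K : nmodType.

Lemma big_partition_seq (I J : eqType) (s : seq I) (ks : seq J) (key : I -> J)
    (F : I -> K) :
  uniq ks -> {in s, forall x, key x \in ks} ->
  \sum_(x <- s) F x = \sum_(k <- ks) \sum_(x <- s | key x == k) F x.
Proof.
move=> uks sks; under [RHS]eq_bigr do rewrite big_mkcond.
rewrite exchange_big; apply: eq_big_seq => x xs /=.
rewrite -big_mkcond -big_filter (eq_filter (a2 := pred1 (key x))); last first.
  by move=> k; rewrite /= eq_sym.
by rewrite filter_pred1_uniq ?sks // big_seq1.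
Qed.

Lemma sum_filter_uniq (T : eqType) (s s' : seq T) (P : pred T) (F : T -> K) :
  uniq s -> uniq s' -> (forall x, (x \in s') = P x && (x \in s)) ->
  \sum_(x <- s | P x) F x = \sum_(x <- s') F x.
Proof.
move=> us us' e; rewrite -big_filter; apply/perm_big/uniq_perm => //.
  exact: filter_uniq.
by move=> x; rewrite mem_filter e.
Qed.

Lemma fsum_is_big (T : eqType) (P : T -> Prop) (f : T -> K) (l : seq T) :
  uniq l -> (forall x, reflect (P x) (x \in l)) -> fsum_is P f (\sum_(x <- l) f x).
Proof.
move=> ul lP; exists l; split; first exact/NoDup_uniq.
by split=> // x; rewrite In_mem; exact: iff_sym (rwP (lP x)).
Qed.

Lemma fsum_is_eq (T : eqType) (P : T -> Prop) (f : T -> K) (k : K) (l : seq T) :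
  fsum_is P f k -> uniq l -> (forall x, reflect (P x) (x \in l)) ->
  k = \sum_(x <- l) f x.
Proof.
case=> l' [/NoDup_uniq ul' [inP ->]] ul lP; apply/perm_big/uniq_perm => // x.
by apply/idP/idP => h; [apply/lP/inP/In_mem | apply/In_mem/inP/lP].
Qed.

End FiniteSums.

Section TextEquality.
Variable D : eqType.

Definition text_pair (t : text D) := (tw t, tp t).
Lemma text_pairK : cancel text_pair (fun p => Text p.1 p.2). Proof. by case. Qed.
HB.instance Definition _ := Equality.copy (text D) (can_type text_pairK).

End TextEquality.

Scheme block_ind2 := Induction for block Sort Prop
with run_ind2 := Induction for run Sort Prop.
Combined Scheme block_run_ind from block_ind2, run_ind2.

Section RunEquality.
Variables Q D O : eqType.

Fixpoint block_eqb (b1 b2 : block Q D O) {struct b1} : bool :=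
  match b1, b2 with
  | Atom q1 a q2, Atom q1' a' q2' => [&& q1 == q1', a == a' & q2 == q2']
  | Defs.Wrap q1 s p1 r p2 q2, Defs.Wrap q1' s' p1' r' p2' q2' =>
      [&& q1 == q1', s == s', p1 == p1', run_eqb r r', p2 == p2' & q2 == q2']
  | _, _ => false
  end
with run_eqb (r1 r2 : run Q D O) {struct r1} : bool :=
  match r1, r2 with
  | One b, One b' => block_eqb b b'
  | More b r, More b' r' => block_eqb b b' && run_eqb r r'
  | _, _ => false
  end.

Lemma block_run_eqb_iff :
  (forall b1 b2, block_eqb b1 b2 <-> b1 = b2) /\
  (forall r1 r2, run_eqb r1 r2 <-> r1 = r2).
Proof.
apply: block_run_ind.
- move=> q1 a q2 [q1' a' q2'|] //=.
  by split=> [/and3P[/eqP-> /eqP-> /eqP->] | [<- <- <-]] //; rewrite !eqxx.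
- move=> q1 s p1 r IH p2 q2 [|q1' s' p1' r' p2' q2'] //=.
  split=> [/and5P[/eqP-> /eqP-> /eqP-> /IH-> /andP[/eqP-> /eqP->]] //|].
  by case=> <- <- <- <- <- <-; rewrite !eqxx (proj2 (IH r)).
- by move=> b IH [b'|] //=; rewrite IH; split=> [->|[]].
- move=> b IHb r IHr [|b' r'] //=.
  by split=> [/andP[/IHb-> /IHr->] | [<- <-]] //; rewrite (proj2 (IHb b)) ?(proj2 (IHr r)).
Qed.

Lemma block_eqbP : Equality.axiom (@block_eqb).
Proof. by move=> b1 b2; case: (proj1 block_run_eqb_iff b1 b2) => *; apply: (iffP idP). Qed.

Lemma run_eqbP : Equality.axiom (@run_eqb).
Proof. by move=> r1 r2; case: (proj2 block_run_eqb_iff r1 r2) => *; apply: (iffP idP). Qed.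

HB.instance Definition _ := hasDecEq.Build (block Q D O) block_eqbP.
HB.instance Definition _ := hasDecEq.Build (run Q D O) run_eqbP.

End RunEquality.

Definition over_splits (D : Type) (T : Type) (f : seq D -> seq D -> seq T) (w : seq D) :=
  flatten [seq f (take i w) (drop i w) | i <- iota 0 (size w).+1].

Lemma mem_over_splits (D : Type) (T : eqType) (f : seq D -> seq D -> seq T) u v x :
  x \in f u v -> x \in over_splits f (u ++ v).
Proof.
move=> xf; apply/flattenP; exists (f u v) => //; apply/mapP; exists (size u).
  by rewrite mem_iota add0n ltnS size_cat leq_addr.
by rewrite take_size_cat ?drop_size_cat.
Qed.

Section AlternatingTexts.
Variable D : eqType.

Definition tjoin (h : bool) : text D -> text D -> text D :=
  if h then @tcomp D else @tbul D.

Lemma tw_tjoin h (t1 t2 : text D) : tw (tjoin h t1 t2) = tw t1 ++ tw t2.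
Proof. by case: h. Qed.

Lemma alt_tjoin h (t1 t2 : text D) : alt_text t1 -> alt_text t2 -> alt_text (tjoin h t1 t2).
Proof. by case: h; constructor. Qed.

Lemma alt_text_size (t : text D) : alt_text t -> (0 < size (tw t))%N.
Proof. by elim=> //= t1 t2 _ h1 _ _; rewrite size_cat addn_gt0 h1. Qed.

Fixpoint text_cands (n : nat) (w : seq D) : seq (text D) :=
  if n is n'.+1 then
    (if w is [:: a] then [:: tsing a] else [::]) ++
    over_splits (fun u v => flatten
      [seq [seq tjoin h t1 t2 | t1 <- text_cands n' u, t2 <- text_cands n' v]
      | h <- [:: true; false]]) w
  else [::].

Lemma text_cands_complete (t : text D) n :
  alt_text t -> (size (tw t) <= n)%N -> t \in text_cands n (tw t).
Proof.
have join h (t1 t2 : text D) : alt_text t1 -> alt_text t2 ->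
    (forall n, (size (tw t1) <= n)%N -> t1 \in text_cands n (tw t1)) ->
    (forall n, (size (tw t2) <= n)%N -> t2 \in text_cands n (tw t2)) ->
    forall n, (size (tw (tjoin h t1 t2)) <= n)%N ->
    tjoin h t1 t2 \in text_cands n (tw (tjoin h t1 t2)).
  move=> a1 a2 IH1 IH2 [|m]; rewrite tw_tjoin size_cat => hm.
    by move: hm (alt_text_size a1); lia.
  rewrite mem_cat; apply/orP; right; apply: mem_over_splits.
  apply/flattenP; exists [seq tjoin h x y | x <- text_cands m (tw t1), y <- text_cands m (tw t2)].
    by apply/mapP; exists h; rewrite // !inE; case: h.
  have [p1 p2] := (alt_text_size a1, alt_text_size a2).
  by apply/allpairsP; exists (t1, t2); split; [apply: IH1 | apply: IH2 |] => //; lia.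
move=> alt_t; elim: alt_t n => [a [|n] //= _ | t1 t2 a1 IH1 a2 IH2 | t1 t2 a1 IH1 a2 IH2].
- by rewrite mem_head.
- exact: (join true).
- exact: (join false).
Qed.

Definition alt_texts (w : seq D) : seq (text D) :=
  undup [seq t <- text_cands (size w) w | `[< alt_text t /\ tw t = w >]].

Lemma alt_textsP w t : reflect (alt_text t /\ tw t = w) (t \in alt_texts w).
Proof.
rewrite mem_undup mem_filter; apply: (iffP andP) => [[/asboolP //] | [alt_t tw_t]].
by split; [apply/asboolP | rewrite -tw_t; apply: text_cands_complete].
Qed.

Lemma alt_texts_uniq w : uniq (alt_texts w).
Proof. exact: undup_uniq. Qed.

End AlternatingTexts.

Section RunEnumeration.
Variables (K : pzSemiRingType) (D : eqType) (A : wpa K D).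
Local Notation Q := (wQ A).
Local Notation O := (wO A).
Local Notation blk := (block Q D O).
Local Notation rn := (run Q D O).

Fixpoint byield (b : blk) : seq D :=
  match b with Atom _ a _ => [:: a] | Defs.Wrap _ _ _ r _ _ => ryield r end
with ryield (r : rn) : seq D :=
  match r with One b => byield b | More b r' => byield b ++ ryield r' end.

Lemma rlab_More (b : blk) (r : rn) :
  rlab (More b r) = tjoin (isH (bfin b)) (blab b) (rlab r).
Proof. by rewrite /=; case: isH. Qed.

Lemma label_yield :
  (forall b : blk, tw (blab b) = byield b /\ alt_text (blab b)) /\
  (forall r : rn, tw (rlab r) = ryield r /\ alt_text (rlab r)).
Proof.
apply: block_run_ind => //.
- by move=> q1 a q2; split=> //; constructor.
- move=> b [yb ab] r [yr ar]; rewrite rlab_More tw_tjoin yb yr.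
  by split=> //; apply: alt_tjoin.
Qed.

Lemma byield_size (b : blk) : (0 < size (byield b))%N.
Proof. by case: (proj1 label_yield b) => <- /alt_text_size. Qed.

Lemma tw_rlab (r : rn) : tw (rlab r) = ryield r.
Proof. by case: (proj2 label_yield r). Qed.

Lemma alt_rlab (r : rn) : alt_text (rlab r).
Proof. by case: (proj2 label_yield r). Qed.

Lemma ryield_size (r : rn) : (0 < size (ryield r))%N.
Proof. by rewrite -tw_rlab; apply/alt_text_size/alt_rlab. Qed.

Definition block_cands (chains : seq D -> seq rn) (w : seq D) : seq blk :=
  (if w is [:: a] then [seq Atom q.1 a q.2 | q <- enum {: Q * Q}] else [::]) ++
  [seq Defs.Wrap c.1.1.1.1 c.1.1.1.2 c.1.1.2 r c.1.2 c.2
  | c <- enum {: Q * O * Q * Q * Q}, r <- chains w].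

Definition run_cands (chains : seq D -> seq rn) (w : seq D) : seq rn :=
  map One (block_cands chains w) ++ chains w.

(* [n] bounds the nesting depth; [n = size w] suffices because every [More]
   splits the word into two nonempty parts. *)
Fixpoint chain_cands (n : nat) (w : seq D) : seq rn :=
  if n is n'.+1 then
    over_splits (fun u v => [seq More b r | b <- block_cands (chain_cands n') u,
                                            r <- run_cands (chain_cands n') v]) w
  else [::].

Lemma cands_complete :
  (forall b : blk, bvalid b -> forall n, (size (byield b) <= n)%N ->
     b \in block_cands (chain_cands n) (byield b)) /\
  (forall r : rn, rvalid r -> forall n, (size (ryield r) <= n)%N ->
     r \in run_cands (chain_cands n) (ryield r)).
Proof.
apply: block_run_ind => /=.
- move=> q1 a q2 _ n _; rewrite mem_cat; apply/orP; left.
  by apply/mapP; exists (q1, q2); rewrite ?mem_enum.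
- move=> q1 s p1 r IH p2 q2 [chain_r [vr _]] n hn.
  rewrite mem_cat; apply/orP; right; apply/allpairsP.
  exists ((q1, s, p1, p2, q2), r); split; rewrite ?mem_enum //.
  have := IH vr n hn; rewrite mem_cat => /orP[/mapP[b _ r_eq] | //].
  by rewrite r_eq in chain_r.
- move=> b IH vb n hn; rewrite mem_cat mem_map ?IH //.
  by move=> ? ? [].
- move=> b IHb r IHr [vb [vr _]] [|n] hn.
    by move: hn (byield_size b); rewrite size_cat; lia.
  have [pb pr] := (byield_size b, ryield_size r).
  rewrite mem_cat; apply/orP; right; apply: mem_over_splits.
  apply/allpairsP; exists (b, r); split; [apply: IHb | apply: IHr |] => //;
    by move: hn; rewrite size_cat; lia.
Qed.

Definition blocks (w : seq D) : seq blk :=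
  undup [seq b <- block_cands (chain_cands (size w)) w | `[< bvalid b /\ byield b = w >]].

Definition runs (w : seq D) : seq rn :=
  undup [seq r <- run_cands (chain_cands (size w)) w | `[< rvalid r /\ ryield r = w >]].

Lemma blocksP w b : reflect (bvalid b /\ byield b = w) (b \in blocks w).
Proof.
rewrite mem_undup mem_filter; apply: (iffP andP) => [[/asboolP //] | [vb yb]].
by split; [apply/asboolP | rewrite -yb; apply: (proj1 cands_complete)].
Qed.

Lemma runsP w r : reflect (rvalid r /\ ryield r = w) (r \in runs w).
Proof.
rewrite mem_undup mem_filter; apply: (iffP andP) => [[/asboolP //] | [vr yr]].
by split; [apply/asboolP | rewrite -yr; apply: (proj2 cands_complete)].
Qed.

Lemma blocks_uniq w : uniq (blocks w).
Proof. exact: undup_uniq. Qed.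

Lemma runs_uniq w : uniq (runs w).
Proof. exact: undup_uniq. Qed.

Lemma blocks_nil : blocks [::] = [::].
Proof.
case E: (blocks [::]) => [//|b s]; have /blocksP[_ yb] : b \in blocks [::] by rewrite E mem_head.
by move: (byield_size b); rewrite yb.
Qed.

Lemma runs_nil : runs [::] = [::].
Proof.
case E: (runs [::]) => [//|r s]; have /runsP[_ yr] : r \in runs [::] by rewrite E mem_head.
by move: (ryield_size r); rewrite yr.
Qed.

End RunEnumeration.

Section AlgebraicSystems.
Variables (K : pzSemiRingType) (D : eqType) (X : finType).
Local Notation mono := (seq (D + X)%type).

Lemma ser_mulr_nil (S : series K D) w : ser_mul S (@ser_word K D [::]) w = S w.
Proof.
rewrite /ser_mul big_ord_recr /= drop_size take_size /ser_word eqxx mulr1.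
rewrite big1 ?add0r // => i _.
by rewrite -size_eq0 size_drop subn_eq0 leqNgt ltn_ord mulr0.
Qed.

Lemma eval_mono_letter (SX : X -> series K D) a w :
  eval_mono SX [:: inl a] w = (w == [:: a])%:R.
Proof. by rewrite /eval_mono /= ser_mulr_nil. Qed.

Lemma eval_mono_pair (SX : X -> series K D) Y Z w :
  eval_mono SX [:: inr Y; inr Z] w = ser_mul (SX Y) (SX Z) w.
Proof. by apply: eq_bigr => i _; rewrite ser_mulr_nil. Qed.

Definition eval_terms (SX : X -> series K D) (L : seq (K * mono)) : series K D :=
  fun w => \sum_(x <- L) x.1 * eval_mono SX x.2 w.

Definition scale_terms (k : K) (L : seq (K * mono)) : seq (K * mono) :=
  [seq (k * x.1, x.2) | x <- L].

Lemma eval_terms_cat SX L1 L2 w :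
  eval_terms SX (L1 ++ L2) w = eval_terms SX L1 w + eval_terms SX L2 w.
Proof. exact: big_cat. Qed.

Lemma eval_scale_terms SX k L w :
  eval_terms SX (scale_terms k L) w = k * eval_terms SX L w.
Proof. by rewrite /eval_terms big_map mulr_sumr; apply: eq_bigr => x _; rewrite mulrA. Qed.

Lemma eval_terms_flatten SX (T : Type) (s : seq T) (f : T -> seq (K * mono)) w :
  eval_terms SX (flatten (map f s)) w = \sum_(c <- s) eval_terms SX (f c) w.
Proof. by rewrite /eval_terms big_flatten big_map. Qed.

Definition terms_coef (L : seq (K * mono)) (u : mono) : K :=
  \sum_(x <- L) x.1 * (x.2 == u)%:R.

Lemma terms_coef_notin L u : u \notin map snd L -> terms_coef L u = 0.
Proof.
move=> uL; apply: big1_seq => x /andP[_ xL].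
by rewrite (_ : x.2 == u = false) ?mulr0 //; apply: contraNF uL => /eqP <-; exact: map_f.
Qed.

Lemma terms_coef_supp L u : terms_coef L u != 0 -> u \in undup (map snd L).
Proof. by rewrite mem_undup; apply: contraR => /terms_coef_notin ->. Qed.

Definition poly_of_terms (L : seq (K * mono)) : poly_sys K D X :=
  @Defs.Poly K D X (terms_coef L) (undup (map snd L)) (undup_uniq _) (@terms_coef_supp L).

Lemma poly_of_terms_eval L (g : mono -> K) :
  \sum_(u <- psupp (poly_of_terms L)) pcoef (poly_of_terms L) u * g u =
  \sum_(x <- L) x.1 * g x.2.
Proof.
rewrite /=; under eq_bigr do rewrite mulr_suml.
rewrite exchange_big; apply: eq_big_seq => x xL /=.
rewrite (bigD1_seq x.2) ?undup_uniq ?mem_undup ?map_f //= eqxx mulr1 big1 ?addr0 //.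
by move=> u /negbTE; rewrite eq_sym => ->; rewrite mulr0 mul0r.
Qed.

Lemma solution_of_terms (L : X -> seq (K * mono)) (SX : X -> series K D) :
  (forall Y w, SX Y w = eval_terms SX (L Y) w) ->
  is_solution (fun Y => poly_of_terms (L Y)) SX.
Proof. by move=> SXL Y w; rewrite poly_of_terms_eval SXL. Qed.

Definition proper_mono (u : mono) : bool :=
  if u is [::] then false else if u is [:: inr _] then false else true.

Lemma proper_of_terms (L : X -> seq (K * mono)) :
  (forall Y, all (fun x => proper_mono x.2) (L Y)) ->
  proper_sys (fun Y => poly_of_terms (L Y)).
Proof.
move=> properL Y Z; split; apply: terms_coef_notin; apply/mapP => -[x xL ux];
  by have := allP (properL Y) x xL; rewrite -ux.
Qed.

End AlgebraicSystems.

Section RunSeries.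
Variables (K : comPzSemiRingType) (D : finType) (A : wpa K D).
Local Notation Q := (wQ A).
Local Notation O := (wO A).
Local Notation blk := (block Q D O).
Local Notation rn := (run Q D O).
Local Notation blocks := (blocks A).
Local Notation runs := (runs A).

Definition is_chain (r : rn) : bool := if r is More _ _ then true else false.

Lemma is_chainP (r : rn) : reflect (by_rule2 r) (is_chain r).
Proof. by case: r; constructor. Qed.

Definition block_series (p q : Q) : series K D :=
  fun w => \sum_(b <- blocks w | (binit b == p) && (bfin b == q)) bwt b.

Definition run_series (p q : Q) : series K D :=
  fun w => \sum_(r <- runs w | (rinit r == p) && (rfin r == q)) rwt r.

Definition chain_series (p q : Q) : series K D :=
  fun w => \sum_(r <- runs w | (rinit r == p) && (rfin r == q) && is_chain r) rwt r.

Definition run_behaviour : series K D :=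
  fun w => \sum_(r <- runs w) lam (rinit r) * rwt r * gam (rfin r).

Lemma block_series_nil p q : block_series p q [::] = 0.
Proof. by rewrite /block_series blocks_nil big_nil. Qed.

Lemma chain_series_nil p q : chain_series p q [::] = 0.
Proof. by rewrite /chain_series runs_nil big_nil. Qed.

Lemma run_behaviour_nil : run_behaviour [::] = 0.
Proof. by rewrite /run_behaviour runs_nil big_nil. Qed.

Lemma run_series_split p q w :
  run_series p q w = block_series p q w + chain_series p q w.
Proof.
rewrite /run_series (bigID is_chain) addrC; congr (_ + _).
rewrite (sum_filter_uniq _ _ (s' := [seq One b | b <- blocks w & (binit b == p) && (bfin b == q)])).
- by rewrite big_map big_filter.
- exact: runs_uniq.
- by rewrite map_inj_uniq ?filter_uniq ?blocks_uniq // => ? ? [].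
case=> [b|b r] /=; last by rewrite andbF; apply/mapP => -[].
rewrite andbT mem_map; last by move=> ? ? [].
by rewrite mem_filter; congr (_ && _); apply/blocksP/runsP.
Qed.

Definition chain_key (r : rn) : nat * Q :=
  if r is More b _ then (size (byield b), bfin b) else (0%N, rinit r).

Lemma sum_chains_at p q m w i : (i <= size w)%N ->
  \sum_(r <- runs w | (rinit r == p) && (rfin r == q) && is_chain r && (chain_key r == (i, m)))
     rwt r =
  block_series p m (take i w) * run_series m q (drop i w).
Proof.
move=> le_iw.
rewrite (sum_filter_uniq _ _ (s' := [seq More b r
  | b <- [seq b <- blocks (take i w) | (binit b == p) && (bfin b == m)],
    r <- [seq r <- runs (drop i w) | (rinit r == m) && (rfin r == q)]])).
- rewrite big_allpairs_dep big_filter big_distrlr; apply: eq_bigr => b _.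
  by rewrite big_filter.
- exact: runs_uniq.
- rewrite allpairs_uniq ?filter_uniq ?blocks_uniq ?runs_uniq //.
  by move=> [? ?] [? ?] _ _ [-> ->].
case=> [b|b r]; first by rewrite /= andbF; apply/allpairsP => -[[? ?] [_ _ //]].
apply/allpairsP/idP => [[[b' r'] [/= hb hr [-> ->]]] |].
  move: hb; rewrite mem_filter => /andP[/andP[/eqP ib /eqP fb] /blocksP[vb yb]].
  move: hr; rewrite mem_filter => /andP[/andP[/eqP ir /eqP fr] /runsP[vr yr]].
  rewrite /= ib fr yb size_takel // fb !eqxx /=; apply/runsP; split.
    by rewrite /= fb ir.
  by rewrite /= yb yr cat_take_drop.
move=> /= /andP[/andP[/andP[/andP[/eqP ib /eqP fr] _] /eqP[si fb]] /runsP[[vb [vr e]] yr]].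
exists (b, r); split => //=; rewrite mem_filter.
  by rewrite ib fb !eqxx; apply/blocksP; rewrite -yr -si take_size_cat.
by rewrite -e fb fr !eqxx; apply/runsP; rewrite -yr -si drop_size_cat.
Qed.

Lemma chain_series_split p q w :
  chain_series p q w = \sum_(m : Q) ser_mul (block_series p m) (run_series m q) w.
Proof.
rewrite /chain_series -big_filter (big_partition_seq _
  (ks := [seq (i, m) | i <- iota 0 (size w).+1, m <- index_enum Q]) (key := chain_key)).
- rewrite big_allpairs exchange_big; apply: eq_bigr => m _.
  have -> : iota 0 (size w).+1 = index_iota 0 (size w).+1 by rewrite /index_iota subn0.
  rewrite big_mkord; apply: eq_bigr => i _.
  by rewrite big_filter_cond sum_chains_at // -ltnS.
- by rewrite allpairs_uniq ?iota_uniq ?index_enum_uniq // => -[? ?] [? ?] _ _ [-> ->].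
move=> r; rewrite mem_filter => /andP[_ /runsP[_ yr]].
apply/allpairsP; case: r yr => [b|b r] yr.
  by exists (0%N, binit b); rewrite mem_iota mem_index_enum.
exists (size (byield b), bfin b); rewrite mem_iota mem_index_enum.
by rewrite -yr /= size_cat ltnS leq_addr.
Qed.

Definition atom_coef (q1 q2 : Q) (a : D) : K := (isH q1 == isH q2)%:R * mu q1 a q2.

Definition wrap_ok (q1 q2 p1 : Q) : bool :=
  (isH q1 == ~~ isH p1) && (isH q2 == ~~ isH p1).

Definition wrap_coef (q1 q2 : Q) (c : O * Q * Q) : K :=
  (wrap_ok q1 q2 c.1.2)%:R * (mu_op q1 c.1.1 c.1.2 * mu_cl c.2 c.1.1 q2).

Definition block_key (b : blk) : option (O * Q * Q) :=
  if b is Defs.Wrap _ s p1 _ p2 _ then Some (s, p1, p2) else None.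

Lemma sum_atom_blocks q1 q2 w :
  \sum_(b <- blocks w | (binit b == q1) && (bfin b == q2) && (block_key b == None)) bwt b =
  \sum_(a : D) atom_coef q1 q2 a * (w == [:: a])%:R.
Proof.
rewrite (sum_filter_uniq _ _ (s' := [seq Atom q1 a q2
  | a <- index_enum D & (isH q1 == isH q2) && (w == [:: a])])).
- rewrite big_map big_filter big_mkcond; apply: eq_bigr => a _ /=.
  rewrite /atom_coef; case: (isH q1 == isH q2); case: (w == [:: a]);
    by rewrite /= ?mul1r ?mulr1 ?mul0r ?mulr0.
- exact: blocks_uniq.
- by rewrite map_inj_uniq ?filter_uniq ?index_enum_uniq // => ? ? [].
case=> [q1' a q2' | ? ? ? ? ? ?]; last by rewrite andbF; apply/mapP => -[].
apply/mapP/andP => [[a' ha [-> -> ->]] | /= [/andP[/andP[/eqP-> /eqP->] _] /blocksP[hH <-]]].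
  move: ha; rewrite mem_filter => /andP[/andP[/eqP hH /eqP ->] _].
  by rewrite !eqxx; split=> //; apply/blocksP.
by exists a; rewrite // mem_filter hH !eqxx mem_index_enum.
Qed.

Lemma sum_wrap_blocks q1 q2 c w :
  \sum_(b <- blocks w | (binit b == q1) && (bfin b == q2) && (block_key b == Some c)) bwt b =
  wrap_coef q1 q2 c * chain_series c.1.2 c.2 w.
Proof.
case: c => [[s p1] p2]; rewrite /wrap_coef /=.
rewrite (sum_filter_uniq _ _ (s' := [seq Defs.Wrap q1 s p1 r p2 q2
  | r <- runs w & wrap_ok q1 q2 p1 && ((rinit r == p1) && (rfin r == p2) && is_chain r)])).
- rewrite big_map big_filter /chain_series.
  case: (wrap_ok q1 q2 p1); last by rewrite big_pred0 ?mul0r.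
  rewrite mul1r mulr_sumr; apply: eq_bigr => r _ /=.
  by rewrite mulrAC.
- exact: blocks_uniq.
- by rewrite map_inj_uniq ?filter_uniq ?runs_uniq // => ? ? [].
case=> [? ? ? | q1' s' p1' r p2' q2']; first by rewrite andbF; apply/mapP => -[].
apply/mapP/idP => [[r' hr' [-> -> -> -> -> ->]] |].
  move: hr'; rewrite mem_filter.
  move=> /andP[/andP[/andP[h1 h2] /andP[/andP[/eqP ir /eqP fr] /is_chainP ch]] /runsP[vr yr]].
  by rewrite !eqxx; apply/blocksP; rewrite /= ir fr (eqP h1) (eqP h2).
move=> /= /andP[/andP[/andP[/eqP-> /eqP->] /eqP[-> -> ->]]].
case/blocksP=> [[ch [vr [ir [fr [h1 h2]]]]] yr].
exists r => //; rewrite mem_filter /wrap_ok h1 h2 -ir -fr !eqxx /=.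
by apply/andP; split; [apply/is_chainP | apply/runsP].
Qed.

Lemma block_series_split q1 q2 w :
  block_series q1 q2 w =
  \sum_(a : D) atom_coef q1 q2 a * (w == [:: a])%:R +
  \sum_(c : O * Q * Q) wrap_coef q1 q2 c * chain_series c.1.2 c.2 w.
Proof.
rewrite /block_series -big_filter (big_partition_seq _
  (ks := None :: map Some (index_enum (O * Q * Q)%type)) (key := block_key)).
- rewrite big_cons big_map big_filter_cond sum_atom_blocks; congr (_ + _).
  by apply: eq_bigr => c _; rewrite big_filter_cond sum_wrap_blocks.
- rewrite /= map_inj_uniq ?index_enum_uniq ?andbT; last by move=> ? ? [].
  by apply/mapP => -[].
by case=> [? ? ? | ? ? ? ? ? ?] _; rewrite //= inE map_f ?mem_index_enum ?orbT.
Qed.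

Lemma run_behaviour_split w :
  run_behaviour w = \sum_(c : Q * Q) lam c.1 * gam c.2 * run_series c.1 c.2 w.
Proof.
rewrite /run_behaviour (partition_big (fun r => (rinit r, rfin r)) xpredT) //.
apply: eq_bigr => -[p q] _; rewrite /run_series mulr_sumr.
apply: eq_big => [r | r /= /eqP[<- <-]]; first by rewrite /= xpair_eqE.
by rewrite mulrAC.
Qed.

End RunSeries.

Section RunSystem.
Variables (K : comPzSemiRingType) (D : finType) (A : wpa K D).
Local Notation Q := (wQ A).
Local Notation O := (wO A).
Local Notation var := (option (bool * Q * Q)).
Local Notation mono := (seq (D + var)%type).

Definition block_var (p q : Q) : var := Some (true, p, q).
Definition chain_var (p q : Q) : var := Some (false, p, q).

Definition chain_terms (p q : Q) : seq (K * mono) :=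
  [seq (1, [:: inr (block_var p m); inr (block_var m q)]) | m <- index_enum Q] ++
  [seq (1, [:: inr (block_var p m); inr (chain_var m q)]) | m <- index_enum Q].

Definition block_terms (q1 q2 : Q) : seq (K * mono) :=
  [seq (atom_coef q1 q2 a, [:: inl a]) | a <- index_enum D] ++
  flatten [seq scale_terms (wrap_coef q1 q2 c) (chain_terms c.1.2 c.2)
          | c <- index_enum (O * Q * Q)%type].

Definition start_terms : seq (K * mono) :=
  flatten [seq scale_terms (lam c.1 * gam c.2) (block_terms c.1 c.2 ++ chain_terms c.1 c.2)
          | c <- index_enum (Q * Q)%type].

Definition run_terms (Y : var) : seq (K * mono) :=
  match Y with
  | None => start_terms
  | Some (true, p, q) => block_terms p q
  | Some (false, p, q) => chain_terms p q
  end.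

Definition run_solution (Y : var) : series K D :=
  match Y with
  | None => run_behaviour A
  | Some (true, p, q) => block_series p q
  | Some (false, p, q) => chain_series p q
  end.

Lemma run_terms_proper Y : all (fun x => proper_mono x.2) (run_terms Y).
Proof.
have chain_ok p q : all (fun x => proper_mono x.2) (chain_terms p q).
  by rewrite all_cat !all_map; apply/andP; split; apply/allP.
have block_ok p q : all (fun x => proper_mono x.2) (block_terms p q).
  rewrite all_cat all_map all_flatten all_map; apply/andP; split; first exact/allP.
  by apply/allP => c _ /=; rewrite all_map; apply: chain_ok.
case: Y => [[[[] p] q]|] //=; rewrite all_flatten all_map; apply/allP => c _ /=.
by rewrite all_map all_cat block_ok chain_ok.
Qed.

Lemma run_solution_nil Y : run_solution Y [::] = 0.
Proof.
by case: Y => [[[[] p] q]|]; rewrite /= ?block_series_nil ?chain_series_nil ?run_behaviour_nil.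
Qed.

Lemma eval_chain_terms p q w :
  eval_terms run_solution (chain_terms p q) w = chain_series p q w.
Proof.
rewrite eval_terms_cat /eval_terms !big_map -big_split chain_series_split.
apply: eq_bigr => m _; rewrite !eval_mono_pair !mul1r /ser_mul -big_split.
by apply: eq_bigr => i _; rewrite run_series_split mulrDr.
Qed.

Lemma eval_block_terms q1 q2 w :
  eval_terms run_solution (block_terms q1 q2) w = block_series q1 q2 w.
Proof.
rewrite eval_terms_cat block_series_split eval_terms_flatten; congr (_ + _).
  by rewrite /eval_terms big_map; apply: eq_bigr => a _; rewrite eval_mono_letter.
by apply: eq_bigr => c _; rewrite eval_scale_terms eval_chain_terms.
Qed.

Lemma run_solution_eq Y w : run_solution Y w = eval_terms run_solution (run_terms Y) w.
Proof.
case: Y => [[[[] p] q]|] /=; rewrite ?eval_block_terms ?eval_chain_terms //.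
rewrite eval_terms_flatten run_behaviour_split; apply: eq_bigr => c _.
by rewrite eval_scale_terms eval_terms_cat eval_block_terms eval_chain_terms run_series_split.
Qed.

End RunSystem.

Lemma run_behaviour_proj (K : comPzSemiRingType) (D : finType) (A : wpa K D)
    (S : text D -> K) :
  (forall t, alt_text t -> behaviour_is A t (S t)) -> proj_is S (run_behaviour A).
Proof.
move=> SA w.
suff -> : run_behaviour A w = \sum_(t <- alt_texts w) S t.
  exact: fsum_is_big (alt_texts_uniq w) (alt_textsP w).
rewrite /run_behaviour (big_partition_seq _ (ks := alt_texts w) (key := @rlab _ _ A)).
- apply: eq_big_seq => t /alt_textsP[alt_t tw_t].
  rewrite (fsum_is_eq (SA t alt_t) (l := [seq r <- runs A w | rlab r == t])).
  + by rewrite big_filter.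
  + exact/filter_uniq/runs_uniq.
  move=> r; rewrite mem_filter; apply: (iffP andP) => [[/eqP lr /runsP[vr _]] | [vr lr]] //.
  by rewrite lr eqxx; split=> //; apply/runsP; rewrite -tw_t -lr tw_rlab.
- exact: alt_texts_uniq.
move=> r /runsP[_ yr]; apply/alt_textsP.
by rewrite tw_rlab yr; split=> //; apply: alt_rlab.
Qed.

Theorem proposition6p11 (K : comNzSemiRingType) (D : finType)
    (S : text D -> K) :
  regular_text_series S ->
  exists T : seq D -> K, proj_is S T /\ algebraic T.
Proof.
case=> A SA; exists (run_behaviour A); split; first exact: run_behaviour_proj.
exists (option (bool * wQ A * wQ A) : finType), (fun Y => poly_of_terms (run_terms Y)),
  (run_solution (A := A)), None.
split; first exact/proper_of_terms/run_terms_proper.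
split; first exact/solution_of_terms/run_solution_eq.
by split=> // Y; apply: run_solution_nil.
Qed.
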